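(* Let $p\in[0,1]$, $\delta\in[0,1]$ and fix an integer $n_{\mathrm u}\ge1$. Then $\epsilon_s\to\epsilon_\infty$ almost surely as $s\to\infty$ for some random variable $\epsilon_\infty\in\{0,1\}$, and $$\Pr(\epsilon_\infty=0)=1-p-\Delta R(\delta,p,n_{\mathrm u}),\qquad \Delta R(\delta,p,n_{\mathrm u})=\big(1-(1-\delta)^{n_{\mathrm u}}\big)(1-p).$$
   Context: Define $T^{+}_{\delta}(\epsilon)=\epsilon^2+(1-\epsilon^2)\delta$, $T^{-}_{\delta}(\epsilon)=2\epsilon-\epsilon^2+(1-2\epsilon+\epsilon^2)\delta$, and the fault-free maps $T^{+}(\epsilon)=\epsilon^2$, $T^{-}(\epsilon)=2\epsilon-\epsilon^2$. The partially protected process $(\epsilon_s)_{s\ge0}$ is defined by $\epsilon_0=p$ and, for $s\ge1$, using independent fair coin flips: if $1\le s\le n_{\mathrm u}$, $\epsilon_s=T^{+}_{\delta}(\epsilon_{s-1})$ or $T^{-}_{\delta}(\epsilon_{s-1})$ each with probability $1/2$; if $s>n_{\mathrm u}$, $\epsilon_s=T^{+}(\epsilon_{s-1})$ or $T^{-}(\epsilon_{s-1})$ each with probability $1/2$. (This models an SC decoder in which only the first $n_{\mathrm u}$ levels are faulty with internal erasure probability $\delta$ and all remaining levels are fault-free.) *)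

From Stdlib Require Import Reals Lra Lia List.
Open Scope R_scope.

(* Faulty and fault-free erasure maps. *)
Definition Tplus_d (d e : R) : R := e ^ 2 + (1 - e ^ 2) * d.
Definition Tminus_d (d e : R) : R := 2 * e - e ^ 2 + (1 - 2 * e + e ^ 2) * d.
Definition Tplus (e : R) : R := e ^ 2.
Definition Tminus (e : R) : R := 2 * e - e ^ 2.

(* Sample space: infinite sequences of fair coin flips.
   Flip number s (0-based) is used to produce eps_(s+1). *)
Definition Omega := nat -> bool.

Fixpoint eps_proc (d p : R) (nu : nat) (w : Omega) (s : nat) : R :=
  match s with
  | O => p
  | S s' =>
      let e := eps_proc d p nu w s' in
      if Nat.leb (S s') nu
      then (if w s' then Tplus_d d e else Tminus_d d e)
      else (if w s' then Tplus e else Tminus e)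
  end.

(* Fair-coin (uniform Bernoulli(1/2) product) measure, via its outer measure
   generated by cylinder sets. *)
Definition cylinder (l : list bool) (w : Omega) : Prop :=
  forall i, (i < length l)%nat -> w i = nth i l false.

Definition cyl_mass (l : list bool) : R := (/ 2) ^ length l.

Definition outer_le (A : Omega -> Prop) (r : R) : Prop :=
  exists c : nat -> list bool,
    (forall w, A w -> exists k, cylinder (c k) w) /\
    (forall N, sum_f_R0 (fun k => cyl_mass (c k)) N <= r).

Definition outer_measure_is (A : Omega -> Prop) (v : R) : Prop :=
  (forall r, v < r -> outer_le A r) /\ (forall r, outer_le A r -> v <= r).

Definition null_set (A : Omega -> Prop) : Prop :=
  forall r, 0 < r -> outer_le A r.

Definition DeltaR (d p : R) (nu : nat) : R := (1 - (1 - d) ^ nu) * (1 - p).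

From Stdlib Require Import Reals Lra Lia List Classical ClassicalEpsilon.
Open Scope R_scope.
Import ListNotations.

(* Each faulty level maps the mean of 1 - eps to (1 - d) times itself and the fault-free
   maps preserve it, so E[1 - eps_s] = (1 - d)^nu (1 - p) for s >= nu.  At fault-free levels
   the Lyapunov function sqrt (eps (1 - eps)) contracts in mean by 9/10; by Markov's inequality
   and a geometric union bound, outside an event of measure O((18/19)^T) it stays below
   (19/20)^s at every level s >= nu + T.  There eps never crosses 1/2 again and converges
   geometrically to 0 or 1 according to its side at level nu + T, so the limit is 0 up to
   small measure exactly when eps_(nu+T) < 1/2, an event whose probability is within
   (9/10)^T of E[1 - eps_(nu+T)].  Matching lower bounds on outer measures come from the
   compactness of Cantor space: covers of two complementary events have total mass >= 1. *)

Fixpoint msum (L : list (list bool)) : R :=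
  match L with [] => 0 | l :: L' => cyl_mass l + msum L' end.

Lemma cyl_mass_pos l : 0 < cyl_mass l.
Proof. apply pow_lt; lra. Qed.

Lemma cyl_mass_cons b l : cyl_mass (b :: l) = cyl_mass l / 2.
Proof. unfold cyl_mass; simpl; field. Qed.

Lemma msum_nonneg L : 0 <= msum L.
Proof. induction L as [|l L IH]; simpl; [lra|]. pose proof (cyl_mass_pos l); lra. Qed.

Lemma msum_app L1 L2 : msum (L1 ++ L2) = msum L1 + msum L2.
Proof. induction L1; simpl; lra. Qed.

Lemma msum_In l L : In l L -> cyl_mass l <= msum L.
Proof.
  induction L as [|a L IH]; simpl; [tauto|]. intros [<-|H].
  - pose proof (msum_nonneg L); lra.
  - pose proof (IH H); pose proof (cyl_mass_pos a); lra.
Qed.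

Lemma msum_map_seq (f : nat -> list bool) N :
  msum (map f (seq 0 (S N))) = sum_f_R0 (fun k => cyl_mass (f k)) N.
Proof.
  induction N as [|N IH]; [simpl; ring|].
  rewrite seq_S, map_app, msum_app, IH; simpl; ring.
Qed.

Lemma msum_map_nth_le L n : (n <= length L)%nat ->
  msum (map (fun k => nth k L []) (seq 0 n)) <= msum L.
Proof.
  revert n; induction L as [|l L IH]; intros [|n] Hn; cbn [length] in Hn.
  - simpl; lra.
  - lia.
  - simpl; pose proof (msum_nonneg (l :: L)); simpl in *; lra.
  - cbn [seq map msum nth]. rewrite <- seq_shift, map_map.
    pose proof (IH n ltac:(lia)); lra.
Qed.

Lemma sum_geometric_le c a N : 0 <= c -> 0 <= a < 1 ->
  sum_f_R0 (fun n => c * a ^ n) N <= c / (1 - a).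
Proof.
  intros Hc Ha.
  assert (Hs : sum_f_R0 (fun n => c * a ^ n) N = c * ((1 - a ^ S N) / (1 - a))).
  { rewrite <- tech3 by lra. rewrite scal_sum. apply sum_eq; intros; ring. }
  rewrite Hs. unfold Rdiv.
  assert (Hi : 0 < / (1 - a)) by (apply Rinv_0_lt_compat; lra).
  pose proof (pow_le a (S N) ltac:(lra)).
  assert (0 <= c * a ^ S N * / (1 - a)) by (apply Rmult_le_pos; [apply Rmult_le_pos|]; lra).
  nra.
Qed.

Lemma pow_small a e : 0 <= a < 1 -> 0 < e -> exists n, a ^ n <= e.
Proof.
  intros Ha He. destruct (pow_lt_1_zero a ltac:(rewrite Rabs_right; lra) e He) as [n Hn].
  exists n. specialize (Hn n (le_n _)).
  rewrite Rabs_right in Hn by (apply Rle_ge, pow_le; lra). lra.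
Qed.

Lemma outer_le_weaken A r r' : outer_le A r -> r <= r' -> outer_le A r'.
Proof. intros [c [Hc Hs]] Hr. exists c. split; [exact Hc|]. intro N. specialize (Hs N). lra. Qed.

Section CountableUnion.

Variable Ls : nat -> list (list bool).
Hypothesis Ls_nonempty : forall n, Ls n <> [].

Fixpoint concat_upto (m : nat) : list (list bool) :=
  match m with O => Ls 0 | S m' => concat_upto m' ++ Ls (S m') end.

Lemma concat_upto_prefix m m' : (m <= m')%nat -> exists t, concat_upto m' = concat_upto m ++ t.
Proof.
  induction 1 as [|m' _ [t Ht]]; [exists []; symmetry; apply app_nil_r|].
  exists (t ++ Ls (S m')). simpl. rewrite Ht, app_assoc. reflexivity.
Qed.

Lemma concat_upto_length m : (m < length (concat_upto m))%nat.
Proof.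
  induction m as [|m IH]; simpl.
  - destruct (Ls 0) eqn:E; [destruct (Ls_nonempty 0 E)|simpl; lia].
  - rewrite length_app. destruct (Ls (S m)) eqn:E; [destruct (Ls_nonempty _ E)|simpl; lia].
Qed.

Lemma In_concat_upto n l : In l (Ls n) -> In l (concat_upto n).
Proof. destruct n; simpl; intro; [assumption|apply in_or_app; right; assumption]. Qed.

Lemma msum_concat_upto m : msum (concat_upto m) = sum_f_R0 (fun n => msum (Ls n)) m.
Proof. induction m as [|m IH]; simpl; [reflexivity|]. rewrite msum_app, IH. reflexivity. Qed.

(* [concat_upto k] has more than k entries and every later [concat_upto m] extends it. *)
Definition enum_cyl (k : nat) : list bool := nth k (concat_upto k) [].

Lemma enum_cyl_nth k m : (k < length (concat_upto m))%nat -> enum_cyl k = nth k (concat_upto m) [].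
Proof.
  intro Hk. unfold enum_cyl. destruct (Nat.le_ge_cases k m) as [H|H];
    destruct (concat_upto_prefix _ _ H) as [t ->]; rewrite app_nth1; try reflexivity.
  - apply concat_upto_length.
  - exact Hk.
Qed.

Lemma enum_cyl_surj n l : In l (Ls n) -> exists k, enum_cyl k = l.
Proof.
  intro Hl. destruct (In_nth _ _ [] (In_concat_upto _ _ Hl)) as [k [Hk Hnth]].
  exists k. rewrite (enum_cyl_nth _ _ Hk). exact Hnth.
Qed.

Lemma enum_cyl_mass N :
  sum_f_R0 (fun k => cyl_mass (enum_cyl k)) N <= sum_f_R0 (fun n => msum (Ls n)) N.
Proof.
  rewrite <- msum_map_seq, <- msum_concat_upto.
  rewrite (map_ext_in _ (fun k => nth k (concat_upto N) [])).
  - apply msum_map_nth_le. apply concat_upto_length.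
  - intros k Hk. apply in_seq in Hk. apply enum_cyl_nth.
    pose proof (concat_upto_length N). lia.
Qed.

End CountableUnion.

Lemma outer_le_of_covers (A : Omega -> Prop) (Ls : nat -> list (list bool)) r e : 0 < e ->
  (forall w, A w -> exists n l, In l (Ls n) /\ cylinder l w) ->
  (forall N, sum_f_R0 (fun n => msum (Ls n)) N <= r) -> outer_le A (r + e).
Proof.
  intros He Hcov Hsum. destruct (pow_small (/2) e ltac:(lra) He) as [t Ht].
  (* Padding every finite family with one cylinder of mass 2^-(n+t+1) makes it nonempty
     at a total cost of at most 2^-t. *)
  set (pad := fun n => repeat false (S (n + t))).
  set (Ls' := fun n => pad n :: Ls n).
  assert (Hpad : forall n, cyl_mass (pad n) = (/2) ^ S t * (/2) ^ n).
  { intro n. unfold cyl_mass, pad. rewrite repeat_length, <- pow_add. f_equal. lia. }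
  exists (enum_cyl Ls'). split.
  - intros w Hw. destruct (Hcov w Hw) as [n [l [Hl Hcyl]]].
    destruct (enum_cyl_surj Ls' ltac:(discriminate) n l ltac:(right; exact Hl)) as [k Hk].
    exists k. rewrite Hk. exact Hcyl.
  - intro N. eapply Rle_trans; [apply enum_cyl_mass; discriminate|].
    unfold Ls'; simpl msum. rewrite sum_plus.
    pose proof (Hsum N) as HN.
    pose proof (sum_geometric_le ((/2) ^ S t) (/2) N ltac:(apply pow_le; lra) ltac:(lra)) as Hg.
    rewrite (sum_eq _ _ N (fun n _ => Hpad n)).
    replace ((/2) ^ S t / (1 - /2)) with ((/2) ^ t) in Hg by (simpl; field). lra.
Qed.

Fixpoint cyl_tails (b : bool) (L : list (list bool)) : list (list bool) :=
  match L with
  | [] => []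
  | [] :: L' => cyl_tails b L'
  | (b' :: l) :: L' => if Bool.eqb b b' then l :: cyl_tails b L' else cyl_tails b L'
  end.

Lemma msum_cyl_tails L : (msum (cyl_tails true L) + msum (cyl_tails false L)) / 2 <= msum L.
Proof.
  induction L as [|[|b l] L IH]; simpl; [lra| |].
  - pose proof (cyl_mass_pos []); lra.
  - rewrite cyl_mass_cons. destruct b; simpl; lra.
Qed.

Lemma In_cyl_tails b l L : In (b :: l) L -> In l (cyl_tails b L).
Proof.
  induction L as [|[|b' l'] L IH]; simpl; [tauto| |]; intros [H|H]; try discriminate; auto.
  - injection H as <- <-. rewrite Bool.eqb_reflx. left; reflexivity.
  - destruct (Bool.eqb b b'); simpl; auto.
Qed.

Lemma In_cyl_tails_inv b l L : In l (cyl_tails b L) -> In (b :: l) L.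
Proof.
  induction L as [|[|b' l'] L IH]; simpl; [tauto|auto|].
  destruct (Bool.eqb b b') eqn:E; simpl; [|auto].
  apply Bool.eqb_prop in E as <-. intros [<-|H]; auto.
Qed.

Definition cons_flip (b : bool) (w : Omega) : Omega :=
  fun i => match i with O => b | S i' => w i' end.

(* Induction on the maximal cylinder length: split the cover according to the first flip. *)
Lemma finite_cover_mass_ge1 M L : (forall l, In l L -> (length l <= M)%nat) ->
  (forall w, exists l, In l L /\ cylinder l w) -> 1 <= msum L.
Proof.
  revert L; induction M as [|M IH]; intros L Hlen Hcov.
  { destruct (Hcov (fun _ => false)) as [[|b l] [Hl _]].
    - pose proof (msum_In _ _ Hl). unfold cyl_mass in *; simpl in *; lra.
    - specialize (Hlen _ Hl); simpl in Hlen; lia. }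
  destruct (classic (In [] L)) as [Hnil|Hnil].
  { pose proof (msum_In _ _ Hnil). unfold cyl_mass in *; simpl in *; lra. }
  assert (Htails : forall b, 1 <= msum (cyl_tails b L)).
  { intro b. apply IH.
    - intros l Hl. specialize (Hlen _ (In_cyl_tails_inv _ _ _ Hl)). simpl in Hlen; lia.
    - intro w. destruct (Hcov (cons_flip b w)) as [[|b' l] [Hl Hcyl]]; [contradiction|].
      assert (b' = b) as -> by (symmetry; apply (Hcyl 0%nat); simpl; lia).
      exists l. split; [apply In_cyl_tails; exact Hl|].
      intros i Hi. apply (Hcyl (S i)). simpl; lia. }
  pose proof (msum_cyl_tails L). pose proof (Htails true). pose proof (Htails false). lra.
Qed.

Lemma length_bound (L : list (list bool)) : exists M, forall l, In l L -> (length l <= M)%nat.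
Proof.
  induction L as [|a L [M HM]]; [exists 0%nat; simpl; tauto|].
  exists (Nat.max (length a) M). intros l [<-|H]; [lia|]. specialize (HM l H); lia.
Qed.

Definition agree (n : nat) (v w : Omega) := forall i, (i < n)%nat -> v i = w i.

Section ClusterPoint.

Variable W : nat -> Omega.

Definition frequent_prefix (n : nat) (v : Omega) :=
  forall M, exists N, (M <= N)%nat /\ agree n v (W N).

Definition set_bit (v : Omega) (n : nat) (b : bool) : Omega :=
  fun i => if Nat.ltb i n then v i else b.

Lemma agree_set_bit n v w : agree n v w -> agree (S n) (set_bit v n (w n)) w.
Proof.
  intros H i Hi. unfold set_bit. destruct (Nat.ltb i n) eqn:E.
  - apply Nat.ltb_lt in E. auto.
  - apply Nat.ltb_ge in E. replace i with n by lia. reflexivity.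
Qed.

Lemma frequent_prefix_extend n v : frequent_prefix n v ->
  frequent_prefix (S n) (set_bit v n true) \/ frequent_prefix (S n) (set_bit v n false).
Proof.
  intro H. destruct (classic (frequent_prefix (S n) (set_bit v n true))) as [Ht|Ht]; [left; exact Ht|].
  right. apply not_all_ex_not in Ht as [M1 Ht]. intro M.
  destruct (H (Nat.max M M1)) as [N [HN Hag]]. exists N. split; [lia|].
  destruct (W N n) eqn:E.
  - exfalso. apply Ht. exists N. split; [lia|]. rewrite <- E. apply agree_set_bit; exact Hag.
  - rewrite <- E. apply agree_set_bit; exact Hag.
Qed.

Fixpoint cluster_prefix (n : nat) : Omega :=
  match n with
  | O => fun _ => false
  | S n' => let v := cluster_prefix n' in
            if excluded_middle_informative (frequent_prefix n (set_bit v n' true))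
            then set_bit v n' true else set_bit v n' false
  end.

Lemma frequent_cluster_prefix n : frequent_prefix n (cluster_prefix n).
Proof.
  induction n as [|n IH].
  - intro M. exists M. split; [lia|]. intros i Hi; lia.
  - simpl. destruct (excluded_middle_informative _) as [H|H]; [exact H|].
    destruct (frequent_prefix_extend _ _ IH); tauto.
Qed.

Lemma cluster_prefix_stable n m i : (i < n)%nat -> (n <= m)%nat ->
  cluster_prefix m i = cluster_prefix n i.
Proof.
  intros Hi; induction 1 as [|m Hnm IH]; [reflexivity|]. rewrite <- IH. simpl.
  assert (E : Nat.ltb i m = true) by (apply Nat.ltb_lt; lia).
  destruct (excluded_middle_informative _); unfold set_bit; rewrite E; reflexivity.
Qed.

(* Sequential compactness of Cantor space, by König's lemma. *)
Lemma cantor_cluster_point : exists v, forall n, frequent_prefix n v.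
Proof.
  exists (fun i => cluster_prefix (S i) i). intros n M.
  destruct (frequent_cluster_prefix n M) as [N [HN Hag]]. exists N. split; [exact HN|].
  intros i Hi. rewrite <- Hag by exact Hi. symmetry; apply cluster_prefix_stable; lia.
Qed.

End ClusterPoint.

Lemma outer_le_full_ge1 r : outer_le (fun _ => True) r -> 1 <= r.
Proof.
  intros [c [Hc Hs]]. apply Rnot_lt_le; intro Hr.
  assert (Hmiss : forall N, exists w, forall k, (k <= N)%nat -> ~ cylinder (c k) w).
  { intro N. set (L := map c (seq 0 (S N))).
    destruct (classic (forall w, exists l, In l L /\ cylinder l w)) as [Hall|Hnot].
    - destruct (length_bound L) as [M HM]. pose proof (finite_cover_mass_ge1 M L HM Hall).
      pose proof (Hs N). unfold L in *. rewrite msum_map_seq in *. lra.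
    - apply not_all_ex_not in Hnot as [w Hw]. exists w. intros k Hk Hcyl. apply Hw.
      exists (c k). split; [apply in_map, in_seq; lia|exact Hcyl]. }
  set (W := fun N => proj1_sig (constructive_indefinite_description _ (Hmiss N))).
  assert (HW : forall N k, (k <= N)%nat -> ~ cylinder (c k) (W N))
    by (intro N; exact (proj2_sig (constructive_indefinite_description _ (Hmiss N)))).
  destruct (cantor_cluster_point W) as [v Hv].
  destruct (Hc v I) as [k Hk]. destruct (Hv (length (c k)) k) as [N [HkN Hag]].
  apply (HW N k HkN). intros i Hi. rewrite <- Hag by exact Hi. apply Hk; exact Hi.
Qed.

Lemma outer_le_cover_ge1 (A B : Omega -> Prop) r1 r2 : (forall w, A w \/ B w) ->
  outer_le A r1 -> outer_le B r2 -> 1 <= r1 + r2.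
Proof.
  intros HAB [c1 [Hc1 Hs1]] [c2 [Hc2 Hs2]]. apply Rle_plus_epsilon. intros e He.
  apply outer_le_full_ge1, (outer_le_of_covers _ (fun n => [c1 n; c2 n])); [exact He| |].
  - intros w _. destruct (HAB w) as [Hw|Hw];
      [destruct (Hc1 w Hw) as [n Hn]|destruct (Hc2 w Hw) as [n Hn]];
      exists n; eexists; (split; [|exact Hn]); simpl; auto.
  - intro N. specialize (Hs1 N); specialize (Hs2 N).
    rewrite (sum_eq _ (fun n => cyl_mass (c1 n) + cyl_mass (c2 n))) by (intros; simpl; ring).
    rewrite sum_plus. lra.
Qed.

Lemma outer_measure_is_intro (A B : Omega -> Prop) v : (forall w, A w \/ B w) ->
  (forall e, 0 < e -> outer_le A (v + e)) -> (forall e, 0 < e -> outer_le B (1 - v + e)) ->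
  outer_measure_is A v.
Proof.
  intros HAB HA HB. split.
  - intros r Hr. apply outer_le_weaken with (v + (r - v)); [apply HA; lra|lra].
  - intros r Hr. apply Rnot_lt_le; intro Hlt.
    pose proof (outer_le_cover_ge1 A B _ _ HAB Hr (HB ((v - r) / 2) ltac:(lra))). lra.
Qed.

(* Histories list the most recent flip first, so [history w n] is the reversed prefix
   [w (n-1); ...; w 0], while cylinders list flips in chronological order. *)
Fixpoint history (w : Omega) (n : nat) : list bool :=
  match n with O => [] | S n' => w n' :: history w n' end.

Lemma history_length w n : length (history w n) = n.
Proof. induction n; simpl; auto. Qed.

Fixpoint expect (n : nat) (F : list bool -> R) : R :=
  match n with
  | O => F []
  | S n' => expect n' (fun r => (F (true :: r) + F (false :: r)) / 2)
  end.

Lemma expect_ext n F G : (forall r, length r = n -> F r = G r) -> expect n F = expect n G.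
Proof.
  revert F G; induction n as [|n IH]; intros F G H; simpl; [apply H; reflexivity|].
  apply IH. intros r Hr. rewrite (H (true :: r)), (H (false :: r)) by (simpl; lia). reflexivity.
Qed.

Lemma expect_mono n F G : (forall r, length r = n -> F r <= G r) -> expect n F <= expect n G.
Proof.
  revert F G; induction n as [|n IH]; intros F G H; simpl; [apply H; reflexivity|].
  apply IH. intros r Hr.
  pose proof (H (true :: r) ltac:(simpl; lia)). pose proof (H (false :: r) ltac:(simpl; lia)). lra.
Qed.

Lemma expect_lin n F G a b :
  expect n (fun r => a * F r + b * G r) = a * expect n F + b * expect n G.
Proof.
  revert F G; induction n as [|n IH]; intros F G; simpl; [reflexivity|].
  rewrite <- IH. apply expect_ext. intros; field.
Qed.

Lemma expect_const n c : expect n (fun _ => c) = c.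
Proof.
  induction n as [|n IH]; simpl; [reflexivity|].
  transitivity (expect n (fun _ => c)); [apply expect_ext; intros; field|exact IH].
Qed.

Lemma expect_scal n F a : expect n (fun r => a * F r) = a * expect n F.
Proof.
  rewrite <- (Rplus_0_r (a * expect n F)), <- (Rmult_0_l (expect n F)), <- expect_lin.
  apply expect_ext; intros; ring.
Qed.

Lemma expect_plus n F G : expect n (fun r => F r + G r) = expect n F + expect n G.
Proof.
  rewrite <- (Rmult_1_l (expect n F)), <- (Rmult_1_l (expect n G)), <- expect_lin.
  apply expect_ext; intros; ring.
Qed.

Definition indic (P : list bool -> Prop) (r : list bool) : R :=
  if excluded_middle_informative (P r) then 1 else 0.

Lemma markov_expect n g th : 0 < th -> (forall r, 0 <= g r) ->
  th * expect n (indic (fun r => th <= g r)) <= expect n g.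
Proof.
  intros Hth Hg. rewrite <- expect_scal. apply expect_mono. intros r _. unfold indic.
  destruct (excluded_middle_informative _); [lra|]. specialize (Hg r); lra.
Qed.

Fixpoint event_cover (n : nat) (P : list bool -> Prop) : list (list bool) :=
  match n with
  | O => if excluded_middle_informative (P []) then [[]] else []
  | S n' => map (fun l => l ++ [true]) (event_cover n' (fun r => P (true :: r))) ++
            map (fun l => l ++ [false]) (event_cover n' (fun r => P (false :: r)))
  end.

Lemma event_cover_length n P l : In l (event_cover n P) -> length l = n.
Proof.
  revert P l; induction n as [|n IH]; intros P l; simpl.
  - destruct (excluded_middle_informative _); simpl; [intros [<-|[]]; reflexivity|tauto].
  - rewrite in_app_iff, !in_map_iff.
    intros [[l' [<- Hl]]|[l' [<- Hl]]]; rewrite length_app, (IH _ _ Hl); simpl; lia.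
Qed.

Lemma cylinder_snoc l w : cylinder l w -> cylinder (l ++ [w (length l)]) w.
Proof.
  intros Hc i Hi. rewrite length_app in Hi; simpl in Hi.
  destruct (Nat.lt_ge_cases i (length l)).
  - rewrite app_nth1 by assumption. auto.
  - replace i with (length l) by lia. rewrite app_nth2, Nat.sub_diag by lia. reflexivity.
Qed.

Lemma event_cover_covers n P w : P (history w n) ->
  exists l, In l (event_cover n P) /\ cylinder l w.
Proof.
  revert P; induction n as [|n IH]; intros P Hw; simpl in *.
  - destruct (excluded_middle_informative _); [|contradiction].
    exists []. split; [left; reflexivity|]. intros i Hi; simpl in Hi; lia.
  - destruct (IH (fun r => P (w n :: r)) Hw) as [l [Hl Hcyl]].
    exists (l ++ [w n]). split.
    + apply in_or_app. destruct (w n); [left|right]; apply (in_map (fun l => l ++ _)), Hl.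
    + rewrite <- (event_cover_length _ _ _ Hl). apply cylinder_snoc, Hcyl.
Qed.

Lemma msum_map_snoc b L : msum (map (fun l => l ++ [b]) L) = msum L / 2.
Proof.
  induction L as [|l L IH]; simpl; [lra|]. rewrite IH.
  unfold cyl_mass. rewrite length_app, Nat.add_1_r. simpl. field.
Qed.

Lemma msum_event_cover n P : msum (event_cover n P) = expect n (indic P).
Proof.
  revert P; induction n as [|n IH]; intro P; simpl.
  - unfold indic. destruct (excluded_middle_informative _); simpl; [|reflexivity].
    unfold cyl_mass; simpl; ring.
  - rewrite msum_app, !msum_map_snoc, !IH.
    rewrite (expect_ext n (fun r => (indic P (true :: r) + indic P (false :: r)) / 2)
      (fun r => /2 * indic (fun r => P (true :: r)) r + /2 * indic (fun r => P (false :: r)) r))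
      by (intros; unfold indic; field).
    rewrite expect_lin. field.
Qed.

Definition lyap (e : R) : R := sqrt (e * (1 - e)).

Lemma lyap_nonneg e : 0 <= lyap e.
Proof. apply sqrt_pos. Qed.

Lemma lyap_sq e : 0 <= e <= 1 -> lyap e * lyap e = e * (1 - e).
Proof. intro. apply sqrt_sqrt. nra. Qed.

Lemma lyap_le_half e : lyap e <= 1/2.
Proof.
  unfold lyap. rewrite <- (sqrt_pow2 (1/2)) by lra. apply sqrt_le_1_alt.
  pose proof (pow2_ge_0 (e - 1/2)). simpl in *. nra.
Qed.

Lemma le_lyap_low x : 0 <= x <= 1/2 -> x <= lyap x.
Proof.
  intro. unfold lyap. rewrite <- (sqrt_pow2 x) at 1 by lra. apply sqrt_le_1_alt. simpl; nra.
Qed.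

Lemma le_lyap_high x : 1/2 <= x <= 1 -> 1 - x <= lyap x.
Proof.
  intro. unfold lyap. rewrite <- (sqrt_pow2 (1 - x)) at 1 by lra. apply sqrt_le_1_alt. simpl; nra.
Qed.

(* With a = sqrt e, b = sqrt (1-e), u = sqrt (1+e), v = sqrt (2-e) the left-hand side is
   a b (a u + b v) / 2, and a u + b v <= sqrt 3 by Cauchy-Schwarz. *)
Lemma lyap_contract e : 0 <= e <= 1 -> (lyap (Tplus e) + lyap (Tminus e)) / 2 <= 9/10 * lyap e.
Proof.
  intros He. unfold lyap, Tplus, Tminus.
  set (a := sqrt e). set (b := sqrt (1 - e)). set (u := sqrt (1 + e)). set (v := sqrt (2 - e)).
  assert (Ha : a * a = e) by (apply sqrt_sqrt; lra).
  assert (Hb : b * b = 1 - e) by (apply sqrt_sqrt; lra).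
  assert (Hu : u * u = 1 + e) by (apply sqrt_sqrt; lra).
  assert (Hv : v * v = 2 - e) by (apply sqrt_sqrt; lra).
  assert (a0 : 0 <= a) by apply sqrt_pos. assert (b0 : 0 <= b) by apply sqrt_pos.
  assert (u0 : 0 <= u) by apply sqrt_pos. assert (v0 : 0 <= v) by apply sqrt_pos.
  replace (e ^ 2 * (1 - e ^ 2)) with ((a * a * b * u) ^ 2)
    by (transitivity ((a * a) * (a * a) * (b * b) * (u * u)); [ring|rewrite Ha, Hb, Hu; ring]).
  replace ((2 * e - e ^ 2) * (1 - (2 * e - e ^ 2))) with ((a * v * b * b) ^ 2)
    by (transitivity ((a * a) * (v * v) * (b * b) * (b * b)); [ring|rewrite Ha, Hb, Hv; ring]).
  replace (e * (1 - e)) with ((a * b) ^ 2)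
    by (transitivity ((a * a) * (b * b)); [ring|rewrite Ha, Hb; ring]).
  rewrite !sqrt_pow2 by (repeat apply Rmult_le_pos; assumption).
  assert (Hcs : (a * u + b * v) * (a * u + b * v) <= 3).
  { assert (Hid : (a * u + b * v) * (a * u + b * v) + (a * v - b * u) * (a * v - b * u)
                  = (a * a + b * b) * (u * u + v * v)) by ring.
    rewrite Ha, Hb, Hu, Hv in Hid. pose proof (Rle_0_sqr (a * v - b * u)). unfold Rsqr in *. nra. }
  assert (a * u + b * v <= 9/5) by nra.
  assert (0 <= a * b) by nra. nra.
Qed.

Lemma free_maps_stay_low x : 0 <= x <= 1 -> lyap x < 1/4 -> x < 1/2 ->
  Tplus x < 1/2 /\ Tminus x < 1/2.
Proof.
  intros Hx Hl Hlow. pose proof (lyap_sq x Hx). pose proof (lyap_nonneg x).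
  assert (x < 1/8) by nra. unfold Tplus, Tminus. simpl. split; nra.
Qed.

Lemma free_maps_stay_high x : 0 <= x <= 1 -> lyap x < 1/4 -> 1/2 <= x ->
  1/2 <= Tplus x /\ 1/2 <= Tminus x.
Proof.
  intros Hx Hl Hhigh. pose proof (lyap_sq x Hx). pose proof (lyap_nonneg x).
  assert (7/8 < x) by nra. unfold Tplus, Tminus. simpl. split; nra.
Qed.

Lemma Un_cv_of_geometric_bound (u : nat -> R) l a : 0 <= a < 1 ->
  (forall k, Rabs (u k - l) <= a ^ k) -> Un_cv u l.
Proof.
  intros Ha H e He. destruct (pow_small a (e / 2) Ha ltac:(lra)) as [K HK].
  exists K. intros n Hn. unfold R_dist. eapply Rle_lt_trans; [apply H|].
  assert (a ^ n <= a ^ K).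
  { replace n with (K + (n - K))%nat by lia. rewrite pow_add.
    pose proof (pow_le a K ltac:(lra)). pose proof (pow_incr a 1 (n - K) ltac:(lra)).
    rewrite pow1 in *. nra. }
  lra.
Qed.

Lemma free_orbit_cv (x : nat -> R) (flip : nat -> bool) a : 0 <= a < 1 ->
  (forall k, x (S k) = if flip k then Tplus (x k) else Tminus (x k)) ->
  (forall k, 0 <= x k <= 1) -> (forall k, lyap (x k) <= a ^ k) ->
  (forall k, lyap (x k) < 1/4) ->
  (x 0%nat < 1/2 -> Un_cv x 0) /\ (1/2 <= x 0%nat -> Un_cv x 1).
Proof.
  intros Ha Hstep Hx Hrate Hsmall. split; intro H0; apply (Un_cv_of_geometric_bound _ _ a Ha).
  - assert (Hlow : forall k, x k < 1/2).
    { induction k as [|k IH]; [exact H0|]. rewrite Hstep.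
      destruct (free_maps_stay_low _ (Hx k) (Hsmall k) IH), (flip k); assumption. }
    intro k. rewrite Rminus_0_r, Rabs_right by (apply Rle_ge, Hx).
    pose proof (le_lyap_low (x k) ltac:(split; [apply Hx|apply Rlt_le, Hlow])).
    pose proof (Hrate k). lra.
  - assert (Hhigh : forall k, 1/2 <= x k).
    { induction k as [|k IH]; [exact H0|]. rewrite Hstep.
      destruct (free_maps_stay_high _ (Hx k) (Hsmall k) IH), (flip k); assumption. }
    intro k. rewrite Rabs_left1 by (pose proof (Hx k); lra).
    pose proof (le_lyap_high (x k) ltac:(split; [apply Hhigh|apply Hx])).
    pose proof (Hrate k). lra.
Qed.

Section Process.

Variables (d p : R) (nu : nat).
Hypotheses (hp : 0 <= p <= 1) (hd : 0 <= d <= 1).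

Definition step (k : nat) (b : bool) (e : R) : R :=
  if Nat.leb k nu then (if b then Tplus_d d e else Tminus_d d e)
  else (if b then Tplus e else Tminus e).

Fixpoint eps_hist (r : list bool) : R :=
  match r with [] => p | b :: r' => step (S (length r')) b (eps_hist r') end.

Lemma eps_proc_hist w n : eps_proc d p nu w n = eps_hist (history w n).
Proof.
  induction n as [|n IH]; [reflexivity|]. simpl. rewrite history_length, <- IH. reflexivity.
Qed.

Lemma eps_proc_free_step w m : (nu <= m)%nat ->
  eps_proc d p nu w (S m) =
  if w m then Tplus (eps_proc d p nu w m) else Tminus (eps_proc d p nu w m).
Proof.
  intro H. cbn [eps_proc].
  replace (Nat.leb (S m) nu) with false by (symmetry; apply Nat.leb_gt; lia). reflexivity.
Qed.

Lemma step_bounds k b e : 0 <= e <= 1 -> 0 <= step k b e <= 1.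
Proof.
  intro He. unfold step, Tplus_d, Tminus_d, Tplus, Tminus.
  assert (0 <= e ^ 2 <= e) by (simpl; nra).
  assert (0 <= (1 - e ^ 2) * d <= 1 - e ^ 2) by (simpl; nra).
  assert (0 <= (1 - 2 * e + e ^ 2) * d <= 1 - 2 * e + e ^ 2) by (simpl; nra).
  destruct (Nat.leb k nu), b; split; lra.
Qed.

Lemma eps_hist_bounds r : 0 <= eps_hist r <= 1.
Proof. induction r; simpl; [exact hp|apply step_bounds; assumption]. Qed.

Lemma eps_proc_bounds w n : 0 <= eps_proc d p nu w n <= 1.
Proof. rewrite eps_proc_hist. apply eps_hist_bounds. Qed.

(* A faulty step maps the mean erasure probability e to e + d (1 - e); a fault-free step
   preserves it. *)
Lemma expect_one_minus_eps n :
  expect n (fun r => 1 - eps_hist r) = (1 - p) * (1 - d) ^ Nat.min n nu.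
Proof.
  induction n as [|n IH]; [simpl; ring|]. simpl expect.
  set (k := if Nat.leb (S n) nu then 1 - d else 1).
  rewrite (expect_ext n _ (fun r => k * (1 - eps_hist r))).
  - rewrite expect_scal, IH. unfold k. destruct (Nat.leb (S n) nu) eqn:E.
    + apply Nat.leb_le in E. rewrite !Nat.min_l by lia. simpl; ring.
    + apply Nat.leb_gt in E. rewrite !Nat.min_r by lia. ring.
  - intros r Hr. simpl. rewrite Hr. unfold k, step.
    destruct (Nat.leb (S n) nu); unfold Tplus_d, Tminus_d, Tplus, Tminus; field.
Qed.

Lemma expect_lyap_le t : expect (nu + t) (fun r => lyap (eps_hist r)) <= 1/2 * (9/10) ^ t.
Proof.
  induction t as [|t IH].
  - rewrite Nat.add_0_r, <- (expect_const nu (1/2)). simpl; rewrite Rmult_1_r.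
    apply expect_mono. intros; apply lyap_le_half.
  - rewrite Nat.add_succ_r. simpl expect.
    apply Rle_trans with (expect (nu + t) (fun r => 9/10 * lyap (eps_hist r))).
    + apply expect_mono. intros r Hr. simpl. rewrite Hr. unfold step.
      replace (Nat.leb (S (nu + t)) nu) with false by (symmetry; apply Nat.leb_gt; lia).
      apply lyap_contract, eps_hist_bounds.
    + rewrite expect_scal. simpl pow. lra.
Qed.

Lemma expect_eps_low T :
  expect (nu + T) (indic (fun r => eps_hist r < 1/2)) <= (1 - p) * (1 - d) ^ nu + 1/2 * (9/10) ^ T.
Proof.
  pose proof (expect_one_minus_eps (nu + T)) as Hmean. rewrite Nat.min_r in Hmean by lia.
  pose proof (expect_lyap_le T).
  apply Rle_trans with (expect (nu + T) (fun r => (1 - eps_hist r) + lyap (eps_hist r))).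
  - apply expect_mono. intros r _. unfold indic.
    pose proof (eps_hist_bounds r). pose proof (lyap_nonneg (eps_hist r)).
    destruct (excluded_middle_informative _); [|lra].
    pose proof (le_lyap_low (eps_hist r) ltac:(lra)). lra.
  - rewrite expect_plus. lra.
Qed.

Lemma expect_eps_high T :
  expect (nu + T) (indic (fun r => 1/2 <= eps_hist r))
  <= 1 - (1 - p) * (1 - d) ^ nu + 1/2 * (9/10) ^ T.
Proof.
  pose proof (expect_one_minus_eps (nu + T)) as Hmean. rewrite Nat.min_r in Hmean by lia.
  rewrite (expect_ext _ _ (fun r => 1 * 1 + (-1) * eps_hist r)), expect_lin, expect_const
    in Hmean by (intros; ring).
  pose proof (expect_lyap_le T).
  apply Rle_trans with (expect (nu + T) (fun r => eps_hist r + lyap (eps_hist r))).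
  - apply expect_mono. intros r _. unfold indic.
    pose proof (eps_hist_bounds r). pose proof (lyap_nonneg (eps_hist r)).
    destruct (excluded_middle_informative _); [|lra].
    pose proof (le_lyap_high (eps_hist r) ltac:(lra)). lra.
  - rewrite expect_plus. lra.
Qed.

Definition bad_event (T : nat) (w : Omega) : Prop :=
  exists k, (19/20) ^ (T + k) <= lyap (eps_proc d p nu w (nu + T + k)).

Lemma expect_lyap_exceeds T k :
  expect (nu + T + k) (indic (fun r => (19/20) ^ (T + k) <= lyap (eps_hist r)))
  <= 1/2 * (18/19) ^ (T + k).
Proof.
  pose proof (markov_expect (nu + T + k) (fun r => lyap (eps_hist r)) ((19/20) ^ (T + k))
    ltac:(apply pow_lt; lra) (fun r => lyap_nonneg _)) as Hm.
  pose proof (expect_lyap_le (T + k)) as Hl. rewrite Nat.add_assoc in Hl.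
  replace (9/10) with (18/19 * (19/20)) in Hl by field. rewrite Rpow_mult_distr in Hl.
  apply (Rmult_le_reg_l ((19/20) ^ (T + k))); [apply pow_lt; lra|]. nra.
Qed.

(* The event at level nu+T is covered by one finite family of cylinders, and the k-th way
   of being bad by the family covering the corresponding event at level nu+T+k. *)
Lemma outer_le_level_or_bad T (P : list bool -> Prop) (A : Omega -> Prop) e : 0 < e ->
  (forall w, A w -> P (history w (nu + T)) \/ bad_event T w) ->
  outer_le A (expect (nu + T) (indic P) + 19/2 * (18/19) ^ T + e).
Proof.
  intros He HA.
  set (Pk := fun k r => (19/20) ^ (T + k) <= lyap (eps_hist r)).
  set (Ls := fun n => match n with
                      | O => event_cover (nu + T) P
                      | S k => event_cover (nu + T + k) (Pk k)
                      end).
  apply (outer_le_of_covers A Ls); [exact He| |].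
  - intros w Hw. destruct (HA w Hw) as [HP|[k Hk]].
    + exists 0%nat. exact (event_cover_covers _ _ _ HP).
    + exists (S k). apply event_cover_covers. unfold Pk. rewrite <- eps_proc_hist. exact Hk.
  - intro N.
    assert (Hbad : forall M, sum_f_R0 (fun k => msum (Ls (S k))) M <= 19/2 * (18/19) ^ T).
    { intro M. eapply Rle_trans; [apply (sum_Rle _ (fun k => 1/2 * (18/19) ^ T * (18/19) ^ k))|].
      - intros k _. simpl Ls. rewrite msum_event_cover, Rmult_assoc, <- pow_add.
        apply expect_lyap_exceeds.
      - eapply Rle_trans; [apply sum_geometric_le; [apply Rmult_le_pos, pow_le|]; lra|].
        apply Req_le. field. }
    assert (H0 : msum (Ls 0%nat) = expect (nu + T) (indic P)) by apply msum_event_cover.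
    destruct N as [|N].
    + cbn [sum_f_R0]. rewrite H0. pose proof (pow_le (18/19) T ltac:(lra)). lra.
    + rewrite decomp_sum, H0 by lia. specialize (Hbad N). simpl pred. lra.
Qed.

Definition eps_limit (w : Omega) : R :=
  if excluded_middle_informative (Un_cv (eps_proc d p nu w) 0) then 0 else 1.

Lemma eps_limit_01 w : eps_limit w = 0 \/ eps_limit w = 1.
Proof. unfold eps_limit. destruct (excluded_middle_informative _); auto. Qed.

Lemma not_bad_eps_limit T w : (19/20) ^ T <= 1/4 -> ~ bad_event T w ->
  Un_cv (eps_proc d p nu w) (eps_limit w) /\
  (eps_limit w = 0 <-> eps_proc d p nu w (nu + T) < 1/2).
Proof.
  intros HT Hgood.
  assert (Hlyap : forall k, lyap (eps_proc d p nu w (nu + T + k)) < (19/20) ^ (T + k))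
    by (intro k; apply Rnot_le_lt; intro Hk; apply Hgood; exists k; exact Hk).
  assert (Hpow : forall k, (19/20) ^ (T + k) <= (19/20) ^ T /\ (19/20) ^ (T + k) <= (19/20) ^ k).
  { intro k. rewrite pow_add. pose proof (pow_le (19/20) T ltac:(lra)).
    pose proof (pow_le (19/20) k ltac:(lra)).
    pose proof (pow_incr (19/20) 1 T ltac:(lra)). pose proof (pow_incr (19/20) 1 k ltac:(lra)).
    rewrite pow1 in *. split; nra. }
  destruct (free_orbit_cv (fun k => eps_proc d p nu w (k + (nu + T))) (fun k => w (k + (nu + T))%nat)
              (19/20) ltac:(lra)) as [Hlow Hhigh].
  - intro k. apply eps_proc_free_step. lia.
  - intro k. apply eps_proc_bounds.
  - intro k. cbv beta. rewrite (Nat.add_comm k). pose proof (Hlyap k). destruct (Hpow k). lra.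
  - intro k. cbv beta. rewrite (Nat.add_comm k). pose proof (Hlyap k). destruct (Hpow k). lra.
  - simpl in Hlow, Hhigh. unfold eps_limit.
    destruct (Rlt_or_le (eps_proc d p nu w (nu + T)) (1/2)) as [Hx|Hx].
    + pose proof (CV_shift _ _ _ (Hlow Hx)).
      destruct (excluded_middle_informative _); [|contradiction]. tauto.
    + pose proof (CV_shift _ _ _ (Hhigh Hx)) as Hcv1.
      destruct (excluded_middle_informative _) as [Hcv0|_].
      * pose proof (UL_sequence _ _ _ Hcv0 Hcv1). lra.
      * split; [exact Hcv1|]. split; intro; lra.
Qed.

Lemma good_horizon e : 0 < e ->
  exists T, (19/20) ^ T <= 1/4 /\ 1/2 * (9/10) ^ T + 19/2 * (18/19) ^ T <= e / 2.
Proof.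
  intro He. destruct (pow_small (19/20) (Rmin (1/4) (e / 20)) ltac:(lra)
                        ltac:(apply Rmin_glb_lt; lra)) as [T HT].
  exists T. pose proof (Rmin_l (1/4) (e / 20)). pose proof (Rmin_r (1/4) (e / 20)).
  pose proof (pow_incr (9/10) (19/20) T ltac:(lra)).
  pose proof (pow_incr (18/19) (19/20) T ltac:(lra)). split; lra.
Qed.

Lemma outer_le_eps_limit_zero e : 0 < e ->
  outer_le (fun w => eps_limit w = 0) ((1 - p) * (1 - d) ^ nu + e).
Proof.
  intro He. destruct (good_horizon e He) as [T [HT Hsmall]].
  eapply outer_le_weaken.
  - apply (outer_le_level_or_bad T (fun r => eps_hist r < 1/2) _ (e / 2) ltac:(lra)).
    intros w Hw. destruct (classic (bad_event T w)) as [Hbad|Hgood]; [right; exact Hbad|left].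
    rewrite <- eps_proc_hist. apply (proj2 (not_bad_eps_limit T w HT Hgood)), Hw.
  - pose proof (expect_eps_low T). lra.
Qed.

Lemma outer_le_eps_limit_nonzero e : 0 < e ->
  outer_le (fun w => eps_limit w <> 0) (1 - (1 - p) * (1 - d) ^ nu + e).
Proof.
  intro He. destruct (good_horizon e He) as [T [HT Hsmall]].
  eapply outer_le_weaken.
  - apply (outer_le_level_or_bad T (fun r => 1/2 <= eps_hist r) _ (e / 2) ltac:(lra)).
    intros w Hw. destruct (classic (bad_event T w)) as [Hbad|Hgood]; [right; exact Hbad|left].
    rewrite <- eps_proc_hist. apply Rnot_lt_le. rewrite <- (proj2 (not_bad_eps_limit T w HT Hgood)).
    exact Hw.
  - pose proof (expect_eps_high T). lra.
Qed.

Lemma null_set_not_cv_eps_limit : null_set (fun w => ~ Un_cv (eps_proc d p nu w) (eps_limit w)).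
Proof.
  intros e He. destruct (good_horizon e He) as [T [HT Hsmall]].
  eapply outer_le_weaken.
  - apply (outer_le_level_or_bad T (fun _ => False) _ (e / 2) ltac:(lra)).
    intros w Hw. right. apply NNPP. intro Hgood. apply Hw, (proj1 (not_bad_eps_limit T w HT Hgood)).
  - rewrite (expect_ext _ _ (fun _ => 0)), expect_const
      by (intros; unfold indic; destruct (excluded_middle_informative False); tauto).
    pose proof (pow_le (9/10) T ltac:(lra)). lra.
Qed.

End Process.

Theorem proposition6 (p d : R) (nu : nat)
  (hp : 0 <= p <= 1) (hd : 0 <= d <= 1) (hnu : (1 <= nu)%nat) :
  exists eps_inf : Omega -> R,
    (forall w, eps_inf w = 0 \/ eps_inf w = 1) /\
    null_set (fun w => ~ Un_cv (eps_proc d p nu w) (eps_inf w)) /\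
    outer_measure_is (fun w => eps_inf w = 0) (1 - p - DeltaR d p nu) /\
    outer_measure_is (fun w => eps_inf w <> 0) (p + DeltaR d p nu).
Proof.
  set (a := (1 - p) * (1 - d) ^ nu).
  assert (Hzero : 1 - p - DeltaR d p nu = a) by (unfold DeltaR, a; ring).
  assert (Hnonzero : p + DeltaR d p nu = 1 - a) by (unfold DeltaR, a; ring).
  assert (Hsplit : forall w, eps_limit d p nu w = 0 \/ eps_limit d p nu w <> 0)
    by (intro w; destruct (Req_dec (eps_limit d p nu w) 0); auto).
  exists (eps_limit d p nu). split; [|split; [|split]].
  - apply eps_limit_01.
  - apply null_set_not_cv_eps_limit; assumption.
  - rewrite Hzero. apply outer_measure_is_intro with (fun w => eps_limit d p nu w <> 0).
    + exact Hsplit.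
    + apply outer_le_eps_limit_zero; assumption.
    + apply outer_le_eps_limit_nonzero; assumption.
  - rewrite Hnonzero. apply outer_measure_is_intro with (fun w => eps_limit d p nu w = 0).
    + intro w. destruct (Hsplit w); auto.
    + apply outer_le_eps_limit_nonzero; assumption.
    + intros e He. replace (1 - (1 - a) + e) with (a + e) by ring.
      apply outer_le_eps_limit_zero; assumption.
Qed.
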